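(* With the setting in the context, for all $t,t'\in\mathrm{hom}(C,G)^{-1}$ and $m,m'\in\mathrm{hom}(C,G)_1$: $A_tA_{t'}=A_{t+t'}=A_{t'}A_t$, $B_mB_{m'}=B_{m+m'}=B_{m'}B_m$, and $A_tB_m=B_mA_t$.
   Context: $(C_\bullet,\partial^C_\bullet)$ is a chain complex with each $C_n$ free abelian on a finite set $K_n$, $K_n\ne\emptyset$ for finitely many $n$; $(G_\bullet,\partial^G_\bullet)$ is a chain complex of finite abelian groups. $\mathrm{hom}(C,G)^p=\prod_n\mathrm{Hom}(C_n,G_{n-p})$ with $(\delta^pf)_n=f_{n-1}\partial^C_n-(-1)^p\partial^G_{n-p}f_n$. $\mathrm{hom}(C,G)_p=\mathrm{Hom}(\mathrm{hom}(C,G)^p,U(1))$ (written additively: the sum of characters is their pointwise product), $\chi_m(f)=m(f)$, $\delta_1m=m\circ\delta^0$. $\mathcal H=\bigotimes_n\bigotimes_{x\in K_n}\mathbb C[G_n]$ with orthonormal basis $|f\rangle$, $f\in\mathrm{hom}(C,G)^0$; $P_t|f\rangle=|f+t\rangle$, $Q_m|f\rangle=\chi_m(f)|f\rangle$; $A_t=P_{\delta^{-1}t}$ for $t\in\mathrm{hom}(C,G)^{-1}$ and $B_m=Q_{\delta_1m}$ for $m\in\mathrm{hom}(C,G)_1$. *)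

From HB Require Import structures.
From mathcomp Require Import all_boot all_order all_algebra.
Unset Printing Implicit Defensive.
Import Order.TTheory GRing.Theory Num.Theory.
Local Open Scope ring_scope.

Section Setting.
(* C_n = free abelian group on the finite set K n, n : int.
   The boundary d^C_n : C_n -> C_{n-1} is given by its integer matrix dC n,
   d^C_n x = \sum_y dC n x y * y. *)
Context (K : int -> finType) (dC : forall n : int, K n -> K (n - 1) -> int).
Context (G : int -> finZmodType) (dG : forall n : int, {additive G n -> G (n - 1)}).

Definition finitely_nonempty : Prop :=
  exists s : seq int, forall n, n \notin s -> #|K n| = 0%N.

Definition C_chain_complex : Prop :=
  forall (n : int) (x : K n) (z : K (n - 1 - 1)),
    \sum_(y : K (n - 1)) dC n x y * dC (n - 1) y z = 0.

Definition G_chain_complex : Prop :=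
  forall (n : int) (g : G n), dG (n - 1) (dG n g) = 0.

Definition castG (a b : int) (e : a = b) (g : G a) : G b :=
  eq_rect a (fun k => (G k : Type)) g b e.

(* hom(C,G)^p = prod_n Hom(C_n, G_{n-p}); a homomorphism out of the free
   abelian group C_n is the same as a function on its basis K n. *)
Definition cochain (p : int) := forall n : int, K n -> G (n - p).

Definition cadd p (f g : cochain p) : cochain p := fun n x => f n x + g n x.
Definition copp p (f : cochain p) : cochain p := fun n x => - f n x.

Lemma idx1 (n p : int) : n - 1 - p = n - (p + 1). Proof. by rewrite opprD addrA addrAC. Qed.
Lemma idx2 (n p : int) : n - p - 1 = n - (p + 1). Proof. by rewrite opprD addrA. Qed.

Definition delta (p : int) (f : cochain p) : cochain (p + 1) :=
  fun n x =>
    castG _ _ (idx1 n p) (\sum_(y : K (n - 1)) f (n - 1) y *~ dC n x y)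
    - castG _ _ (idx2 n p) (dG (n - p) (f n x)) *~ ((-1) ^ p).

End Setting.

Section Operators.
Context (K : int -> finType) (dC : forall n : int, K n -> K (n - 1) -> int).
Context (G : int -> finZmodType) (dG : forall n : int, {additive G n -> G (n - 1)}).
Context (Cx : numClosedFieldType).

Definition is_character p (m : cochain K G p -> Cx) : Prop :=
  (forall f g, m (cadd K G p f g) = m f * m g) /\ (forall f, `|m f| = 1).

Definition char_add p (m m' : cochain K G p -> Cx) : cochain K G p -> Cx :=
  fun f => m f * m' f.

(* H: vectors are coefficient functions on the orthonormal basis |f>,
   f in hom(C,G)^0 (a finite set) *)
Definition hilb := cochain K G 0 -> Cx.

(* P_t |f> = |f + t>  i.e.  (P_t psi)(g) = psi(g - t) *)
Definition Pop (t : cochain K G 0) (psi : hilb) : hilb :=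
  fun g => psi (cadd K G 0 g (copp K G 0 t)).
Definition Qop (m : cochain K G 0 -> Cx) (psi : hilb) : hilb :=
  fun f => m f * psi f.

Definition Aop (t : cochain K G (-1)) : hilb -> hilb := Pop (delta K dC G dG (-1) t).
Definition Bop (m : cochain K G 1 -> Cx) : hilb -> hilb :=
  Qop (fun f => m (delta K dC G dG 0 f)).

End Operators.

Arguments C_chain_complex {K} dC.
Arguments G_chain_complex {G} dG.
Arguments castG {G a b} e g.
Arguments cadd {K G p} f g.
Arguments copp {K G p} f.
Arguments delta {K} dC {G} dG {p} f.
Arguments is_character {K G Cx p} m.
Arguments char_add {K G Cx p} m m'.
Arguments Pop {K G Cx} t psi.
Arguments Qop {K G Cx} m psi.
Arguments Aop {K} dC {G} dG Cx t psi.
Arguments Bop {K} dC {G} dG {Cx} m psi.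

From HB Require Import structures.
From mathcomp Require Import all_boot all_order all_algebra.
From Stdlib Require Import FunctionalExtensionality.
Import Order.TTheory GRing.Theory Num.Theory.
Local Open Scope ring_scope.

(* A_t is translation by the coboundary delta t and B_m is multiplication by
   the function m o delta; translations compose additively and multiplications
   multiply, so both families commute among themselves.  A_t and B_m commute
   because m o delta is invariant under translation by coboundaries, which is
   the identity delta o delta = 0. *)

Section Transport.
Context {G : int -> finZmodType}.
Implicit Types (a b c : int).

Lemma castG0 a b (e : a = b) : castG e (0 : G a) = 0.
Proof. by case: b / e. Qed.

Lemma castGD a b (e : a = b) (x y : G a) : castG e (x + y) = castG e x + castG e y.
Proof. by case: b / e. Qed.

Lemma castGN a b (e : a = b) (x : G a) : castG e (- x) = - castG e x.
Proof. by case: b / e. Qed.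

Lemma castGB a b (e : a = b) (x y : G a) : castG e (x - y) = castG e x - castG e y.
Proof. by case: b / e. Qed.

Lemma castGMz a b (e : a = b) (x : G a) z : castG e (x *~ z) = castG e x *~ z.
Proof. by case: b / e. Qed.

Lemma castG_sum a b (e : a = b) (I : finType) (F : I -> G a) :
  castG e (\sum_i F i) = \sum_i castG e (F i).
Proof. by case: b / e. Qed.

Lemma castG_trans a b c (e1 : a = b) (e2 : b = c) (g : G a) :
  castG e2 (castG e1 g) = castG (etrans e1 e2) g.
Proof. by case: c / e2; case: b / e1. Qed.

Lemma castG_castG {a b b' c} (e1 : a = b) (e2 : b = c) (d1 : a = b') (d2 : b' = c)
  (g : G a) : castG e2 (castG e1 g) = castG d2 (castG d1 g).
Proof. by rewrite !castG_trans (eq_irrelevance (etrans e1 e2) (etrans d1 d2)). Qed.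

Variable dG : forall n : int, {additive G n -> G (n - 1)}.

Lemma dG_castG a b (e : a = b) (g : G a) :
  dG b (castG e g) = castG (f_equal (fun k => k - 1) e) (dG a g).
Proof. by case: b / e. Qed.

End Transport.

Lemma exprz_N1S (p : int) : (-1) ^ (p + 1) = - (-1) ^ p :> int.
Proof. by rewrite exprzDr ?unitrN1 // expr1z mulrN1. Qed.

Section Coboundary.
Variables (K : int -> finType) (dC : forall n : int, K n -> K (n - 1) -> int).
Variables (G : int -> finZmodType) (dG : forall n : int, {additive G n -> G (n - 1)}).

Lemma cochain_ext p (f g : cochain K G p) : (forall n x, f n x = g n x) -> f = g.
Proof.
by move=> fg; apply: functional_extensionality_dep => n; apply: functional_extensionality.
Qed.

Lemma deltaD p (f g : cochain K G p) :
  delta dC dG (cadd f g) = cadd (delta dC dG f) (delta dC dG g).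
Proof.
apply: cochain_ext => n x; rewrite /delta /cadd.
under eq_bigr do rewrite mulrzDl.
by rewrite big_split /= (raddfD (dG _)) !castGD mulrzDl (@opprD (G _)) (@addrACA (G _)).
Qed.

Lemma deltaN p (f : cochain K G p) : delta dC dG (copp f) = copp (delta dC dG f).
Proof.
apply: cochain_ext => n x; rewrite /delta /copp.
under eq_bigr do rewrite mulNrz.
by rewrite sumrN (raddfN (dG _)) !castGN mulNrz (@opprD (G _)).
Qed.

Hypotheses (hC : C_chain_complex dC) (hG : G_chain_complex dG).

Lemma sum_dC_dC (V : zmodType) n (x : K n) (h : K (n - 1 - 1) -> V) :
  \sum_y (\sum_z h z *~ dC (n - 1) y z) *~ dC n x y = 0.
Proof.
under eq_bigr do rewrite mulrz_suml.
rewrite exchange_big big1 // => z _.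
under eq_bigr do rewrite -mulrzA mulrC.
by rewrite -mulrz_sumr hC mulr0z.
Qed.

Lemma delta_delta {p} (f : cochain K G p) n x : delta dC dG (delta dC dG f) n x = 0.
Proof.
(* The terms f d^C d^C and d^G d^G f vanish; the two terms d^G f d^C carry the
   opposite signs (-1)^p and (-1)^(p+1). *)
rewrite /delta exprz_N1S mulrNz (@opprK (G _)).
under eq_bigr do rewrite mulrzBl.
rewrite sumrB castGB.
under [X in castG _ X - _]eq_bigr do rewrite -castGMz.
rewrite -castG_sum sum_dC_dC !castG0 (@sub0r (G _)) (raddfB (dG _)) castGB !dG_castG.
rewrite (raddfMz (dG _)) dG_castG hG castG0 mul0rz castG0 (@subr0 (G _)).
have -> : \sum_y castG (idx2 (n - 1) p) (dG _ (f (n - 1) y)) *~ (-1) ^ p *~ dC n x y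
    = castG (idx2 (n - 1) p) (dG _ (\sum_y f (n - 1) y *~ dC n x y)) *~ (-1) ^ p.
  rewrite (raddf_sum (dG _)) castG_sum mulrz_suml; apply: eq_bigr => y _.
  by rewrite (raddfMz (dG _)) castGMz -!mulrzA mulrC.
rewrite castGMz (castG_castG _ (idx2 n (p + 1)) (idx2 (n - 1) p) (idx1 n (p + 1))).
exact: addNr.
Qed.

Lemma delta_subr_delta (g : cochain K G 0) (t : cochain K G (-1)) :
  delta dC dG (cadd g (copp (delta dC dG t))) = delta dC dG g.
Proof.
rewrite deltaD deltaN; apply: cochain_ext => n x.
by rewrite /cadd /copp (delta_delta t) (@oppr0 (G _)) (@addr0 (G _)).
Qed.

End Coboundary.

Section Operators.
Variables (K : int -> finType) (G : int -> finZmodType) (Cx : numClosedFieldType).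
Implicit Types (s t : cochain K G 0) (chi : cochain K G 0 -> Cx).

Lemma caddC p (f g : cochain K G p) : cadd f g = cadd g f.
Proof. by apply: cochain_ext => n x; rewrite /cadd (@addrC (G _)). Qed.

Lemma Pop_comp s t : Pop s \o Pop t = Pop (Cx := Cx) (cadd s t).
Proof.
apply: functional_extensionality => psi; apply: functional_extensionality => g.
rewrite /Pop /=; congr psi; apply: cochain_ext => n x.
by rewrite /cadd /copp (@opprD (G _)) (@addrA (G _)).
Qed.

Lemma Qop_comp (chi chi' : cochain K G 0 -> Cx) :
  Qop chi \o Qop chi' = Qop (char_add chi chi').
Proof.
apply: functional_extensionality => psi; apply: functional_extensionality => f.
by rewrite /Qop /char_add /= mulrA.
Qed.

Lemma char_addC p (m m' : cochain K G p -> Cx) : char_add m m' = char_add m' m.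
Proof. by apply: functional_extensionality => f; rewrite /char_add mulrC. Qed.

Lemma Pop_Qop_comm t chi : (forall g, chi (cadd g (copp t)) = chi g) ->
  Pop t \o Qop chi = Qop chi \o Pop t.
Proof.
move=> chi_inv; apply: functional_extensionality => psi.
by apply: functional_extensionality => g; rewrite /Pop /Qop /= chi_inv.
Qed.

End Operators.

Theorem lemma4 (K : int -> finType) (dC : forall n : int, K n -> K (n - 1) -> int)
  (G : int -> finZmodType) (dG : forall n : int, {additive G n -> G (n - 1)})
  (Cx : numClosedFieldType)
  (hK : finitely_nonempty K) (hC : C_chain_complex dC) (hG : G_chain_complex dG)
  (t t' : cochain K G (-1)) (m m' : cochain K G 1 -> Cx)
  (hm : is_character m) (hm' : is_character m') :
  [/\ Aop dC dG Cx t \o Aop dC dG Cx t' = Aop dC dG Cx (cadd t t'),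
      Aop dC dG Cx (cadd t t') = Aop dC dG Cx t' \o Aop dC dG Cx t,
      Bop dC dG m \o Bop dC dG m' = Bop dC dG (char_add m m'),
      Bop dC dG (char_add m m') = Bop dC dG m' \o Bop dC dG m
    & Aop dC dG Cx t \o Bop dC dG m = Bop dC dG m \o Aop dC dG Cx t].
Proof.
rewrite /Aop /Bop; split.
- by rewrite Pop_comp deltaD.
- by rewrite Pop_comp deltaD caddC.
- exact: Qop_comp.
- by rewrite Qop_comp char_addC.
- by apply: Pop_Qop_comm => g; rewrite delta_subr_delta.
Qed.
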